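(* For every $v\in\Delta\setminus\mathcal C$, $\langle\nabla H(v),F(v)\rangle>0$; i.e. $H$ is a strict Lyapunov function for $F$ on $\Delta$.
   Context: Let $N\ge2$, $E=\{1,\dots,N\}$, $\alpha>1$, and let $A=(A_{i,j})_{i,j\le N}$ be a symmetric matrix with nonnegative entries, $A_{i,j}>0$ for $i\ne j$, and $\sum_j A_{i,j}$ independent of $i$. Let $\Delta=\{v\in\mathbb R_+^N:\ \sum_i v_i=1,\ v_i\le 3/4 \text{ whenever } A_{i,i}=0\}$. For $v\in\Delta$ let $v^\alpha=(v_1^\alpha,\dots,v_N^\alpha)$, $H(v)=\sum_{i,j}A_{i,j}v_i^\alpha v_j^\alpha$ (positive on $\Delta$; $\nabla H$ is its gradient computed from this formula) and $\pi_i(v)=v_i^\alpha(Av^\alpha)_i/H(v)$. Let $\imath$ be the nearest-point projection of $\{v:\sum_iv_i=1\}$ onto $\Delta$ and $F(v)=-v+\pi(\imath(v))$. The equilibrium set is $\mathcal C=\{v\in\Delta: F(v)=0\}$. *)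

From Stdlib Require Import ClassicalEpsilon.
From mathcomp Require Import all_boot all_order all_algebra.
From mathcomp Require Import all_classical all_reals all_analysis.
Set Implicit Arguments. Unset Strict Implicit. Unset Printing Implicit Defensive.
Import Order.TTheory GRing.Theory Num.Theory.
Local Open Scope ring_scope.

Section Defs.
Variables (R : realType) (N : nat).
Implicit Types (A : 'M[R]_N) (alpha : R) (u v w : 'I_N -> R).

Definition Hfun A alpha v : R :=
  \sum_(i < N) \sum_(j < N) A i j * powR (v i) alpha * powR (v j) alpha.

(* gradient of H computed from the formula above:
   dH/dv_k = alpha v_k^(alpha-1) sum_j (A_kj + A_jk) v_j^alpha *)
Definition gradH A alpha v : 'I_N -> R := fun k =>
  alpha * powR (v k) (alpha - 1) *
  \sum_(j < N) (A k j + A j k) * powR (v j) alpha.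

Definition pifun A alpha v : 'I_N -> R := fun i =>
  powR (v i) alpha * (\sum_(j < N) A i j * powR (v j) alpha) / Hfun A alpha v.

Definition Delta A v : Prop :=
  [/\ forall i, 0 <= v i, \sum_(i < N) v i = 1 &
      forall i, A i i = 0 -> v i <= 3 / 4].

Definition sqdist u v : R := \sum_(i < N) (u i - v i) ^+ 2.

Definition is_proj A v w : Prop :=
  Delta A w /\ forall u, Delta A u -> sqdist v w <= sqdist v u.

(* nearest-point projection iota (Delta is nonempty, closed, convex, so the
   minimizer exists and is unique; chosen by classical choice) *)
Definition iota A v : 'I_N -> R :=
  epsilon (inhabits (fun _ : 'I_N => (0 : R))) (is_proj A v).

Definition Ffun A alpha v : 'I_N -> R := fun i =>
  - v i + pifun A alpha (iota A v) i.

Definition equilibrium A alpha v : Prop :=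
  Delta A v /\ forall i, Ffun A alpha v i = 0.

Definition inner u v : R := \sum_(i < N) u i * v i.

End Defs.

(** On [Delta] the projection [iota] is the identity, so [F v = pi v - v].
    Put [a_k = v_k^(alpha-1) (A v^alpha)_k]; then [sum_k v_k a_k = H v], and by
    the symmetry of [A] the gradient is [dH/dv_k = 2 alpha a_k].  Using
    [sum_k v_k = 1] this gives
    [<grad H, F> = (2 alpha / H) sum_k v_k (a_k - H)^2 >= 0],
    a variance of the [a_k] under the weights [v_k].  It vanishes only when
    [v_k a_k = v_k H] for every [k], i.e. when [pi v = v]. *)
From Pilot Require Import Defs.
From Stdlib Require Import ClassicalEpsilon.
From mathcomp Require Import all_boot all_order all_algebra.
From mathcomp Require Import all_classical all_reals all_analysis.
From mathcomp Require Import ring lra.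
Set Implicit Arguments. Unset Strict Implicit. Unset Printing Implicit Defensive.
Import Order.TTheory GRing.Theory Num.Theory.
Local Open Scope ring_scope.

Lemma psumr_gt0 (R : numDomainType) (I : finType) (P : pred I) (F : I -> R) i0 :
  (forall i, P i -> 0 <= F i) -> P i0 -> 0 < F i0 -> 0 < \sum_(i | P i) F i.
Proof.
move=> F_ge0 Pi0 Fi0; rewrite (bigD1 i0) //= ltr_pwDl //.
by apply: sumr_ge0 => i /andP[/F_ge0].
Qed.

Lemma psumr_gt0_witness (R : numDomainType) (I : finType) (P : pred I)
    (F : I -> R) :
  (forall i, P i -> 0 <= F i) -> 0 < \sum_(i | P i) F i ->
  exists2 i, P i & 0 < F i.
Proof.
move=> F_ge0 /lt0r_neq0; rewrite psumr_neq0 //.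
by case/hasP => i _ /andP[Pi Fi]; exists i.
Qed.

Section Projection.
Variables (R : realType) (N : nat) (A : 'M[R]_N).
Implicit Types u v : 'I_N -> R.

Lemma sqdist_ge0 u v : 0 <= sqdist u v.
Proof. by apply: sumr_ge0 => i _; apply: sqr_ge0. Qed.

Lemma sqdistxx v : sqdist v v = 0.
Proof. by rewrite /sqdist big1 // => i _; rewrite subrr expr0n. Qed.

Lemma sqdist_eq0 u v : sqdist u v = 0 -> u = v.
Proof.
move=> d0; apply/funext => i.
have /(_ i isT)/eqP := psumr_eq0P (fun j _ => sqr_ge0 (u j - v j)) d0.
by rewrite sqrf_eq0 subr_eq0 => /eqP.
Qed.

Lemma is_proj_self v : Delta A v -> is_proj A v v.
Proof. by move=> Dv; split => // u _; rewrite sqdistxx sqdist_ge0. Qed.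

Lemma iota_id v : Delta A v -> Defs.iota A v = v.
Proof.
move=> Dv; have [_ minw] := epsilon_spec (inhabits (fun _ : 'I_N => (0 : R)))
  (is_proj A v) (ex_intro _ v (is_proj_self Dv)).
apply/esym/sqdist_eq0/eqP; rewrite eq_le sqdist_ge0 andbT -(sqdistxx v).
exact: minw.
Qed.

End Projection.

Section Lyapunov.
Variables (R : realType) (N : nat) (A : 'M[R]_N) (alpha : R).
Implicit Types v : 'I_N -> R.

Definition Apow v k : R := \sum_(j < N) A k j * powR (v j) alpha.

Definition payoff v k : R := powR (v k) (alpha - 1) * Apow v k.

Lemma Hfun_Apow v : Hfun A alpha v = \sum_k powR (v k) alpha * Apow v k.
Proof.
apply: eq_bigr => i _; rewrite /Apow mulr_sumr.
by apply: eq_bigr => j _; ring.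
Qed.

Lemma gradH_payoff v k :
  (forall i j, A i j = A j i) -> gradH A alpha v k = 2 * alpha * payoff v k.
Proof.
move=> Asym; rewrite /gradH /payoff /Apow.
have -> : \sum_j (A k j + A j k) * powR (v j) alpha =
          2 * \sum_j A k j * powR (v j) alpha.
  by rewrite mulr_sumr; apply: eq_bigr => j _; rewrite (Asym j k); ring.
ring.
Qed.

Hypothesis alpha_gt0 : 0 < alpha.

Lemma powR_payoff v k :
  0 <= v k -> powR (v k) alpha * Apow v k = v k * payoff v k.
Proof. by move=> vk_ge0; rewrite /payoff mulrA mulr_powRB1. Qed.

Lemma Hfun_payoff v :
  (forall k, 0 <= v k) -> Hfun A alpha v = \sum_k v k * payoff v k.
Proof.
by move=> v_ge0; rewrite Hfun_Apow; apply: eq_bigr => k _; rewrite powR_payoff.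
Qed.

Lemma pifun_payoff v k :
  0 <= v k -> pifun A alpha v k = v k * payoff v k / Hfun A alpha v.
Proof. by move=> vk_ge0; rewrite /pifun powR_payoff. Qed.

Lemma inner_gradH_replicator v :
  (forall i j, A i j = A j i) -> (forall k, 0 <= v k) ->
  Hfun A alpha v != 0 ->
  inner (gradH A alpha v) (fun k => - v k + pifun A alpha v k) =
    2 * alpha / Hfun A alpha v *
      \sum_k v k * (payoff v k - Hfun A alpha v) ^+ 2
    + 2 * alpha * Hfun A alpha v * (1 - \sum_k v k).
Proof.
move=> Asym v_ge0 H_neq0; set H := Hfun A alpha v.
rewrite /inner (eq_bigr (fun k => 2 * alpha / H * (v k * (payoff v k - H) ^+ 2)
    + 2 * alpha * (v k * payoff v k - H * v k))); last first.
  by move=> k _; rewrite gradH_payoff // pifun_payoff // -/H; field.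
rewrite big_split /= -!mulr_sumr sumrB -mulr_sumr -Hfun_payoff // -/H.
congr (_ + _); ring.
Qed.

Lemma replicator_fixed v k :
  Hfun A alpha v != 0 -> 0 <= v k ->
  v k * (payoff v k - Hfun A alpha v) ^+ 2 = 0 -> - v k + pifun A alpha v k = 0.
Proof.
move=> H_neq0 vk_ge0 /eqP; rewrite pifun_payoff // mulf_eq0 sqrf_eq0 subr_eq0.
case/orP => [/eqP-> | /eqP->]; first by rewrite !mul0r oppr0 add0r.
by rewrite mulfK // addNr.
Qed.

Lemma Delta_coord_pos v : Delta A v -> exists i, 0 < v i.
Proof.
case=> v_ge0 v1 _; have [i _ vi] : exists2 i, predT i & 0 < v i.
  by apply: psumr_gt0_witness => [i _|]; rewrite ?v1.
by exists i.
Qed.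

(** A zero diagonal entry caps [v i] at [3/4], leaving mass [1/4] on the
    other coordinates, which meet [i] through positive off-diagonal entries. *)
Lemma Hfun_gt0 v :
  (forall i j, 0 <= A i j) -> (forall i j, i != j -> 0 < A i j) ->
  Delta A v -> 0 < Hfun A alpha v.
Proof.
move=> A_ge0 A_offdiag Dv; have [v_ge0 v1 v34] := Dv.
have [i vi] := Delta_coord_pos Dv.
have term_ge0 k l : 0 <= A k l * powR (v k) alpha * powR (v l) alpha.
  by rewrite !mulr_ge0 ?powR_ge0.
apply: (@psumr_gt0 _ _ _ _ i) => // [k _|]; first exact: sumr_ge0.
have [Aii0|Aii_neq0] := eqVneq (A i i) 0.
  have [j ji vj] : exists2 j, j != i & 0 < v j.
    apply: psumr_gt0_witness => [j _|]; first exact: v_ge0.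
    by move: v1 (v34 i Aii0); rewrite (bigD1 i) //=; lra.
  apply: (@psumr_gt0 _ _ _ _ j) => //.
  by rewrite !mulr_gt0 ?powR_gt0 // A_offdiag // eq_sym.
apply: (@psumr_gt0 _ _ _ _ i) => //.
by rewrite !mulr_gt0 ?powR_gt0 // lt_def Aii_neq0 A_ge0.
Qed.

End Lyapunov.

Theorem lemma3p2 (R : realType) (N : nat) (alpha : R) (A : 'M[R]_N) :
  (2 <= N)%N ->
  1 < alpha ->
  (forall i j, A i j = A j i) ->
  (forall i j, 0 <= A i j) ->
  (forall i j, i != j -> 0 < A i j) ->
  (forall i k, \sum_(j < N) A i j = \sum_(j < N) A k j) ->
  forall v : 'I_N -> R,
    Delta A v -> ~ equilibrium A alpha v ->
    0 < inner (gradH A alpha v) (Ffun A alpha v).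
Proof.
move=> _ alpha_gt1 Asym A_ge0 A_offdiag _ v Dv not_eq.
have alpha_gt0 : 0 < alpha by lra.
have H_gt0 := Hfun_gt0 alpha A_ge0 A_offdiag Dv.
have [v_ge0 v1 _] := Dv.
have F_replicator : Ffun A alpha v = fun k => - v k + pifun A alpha v k.
  by apply/funext => k; rewrite /Ffun iota_id.
rewrite F_replicator inner_gradH_replicator ?gt_eqF // v1 subrr mulr0 addr0.
rewrite mulr_gt0 ?divr_gt0 ?mulr_gt0 // lt_def sumr_ge0 ?andbT; last first.
  by move=> k _; rewrite mulr_ge0 ?sqr_ge0.
apply: contra_notN not_eq => /eqP var0; split=> // k; rewrite F_replicator.
apply: replicator_fixed; rewrite ?gt_eqF //.
exact: psumr_eq0P (fun j _ => mulr_ge0 (v_ge0 j) (sqr_ge0 _)) var0 k isT.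
Qed.
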